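(* Let $L\ge1$ be an integer and $\theta>0$. Let $\Omega=\{0,1\}^I$ for a countable index set $I$, equipped with a product probability measure, and partially ordered coordinatewise. For $t=0,1,\dots,L$ let $S_t:\Omega\to(0,\infty]$ be nonincreasing functions (the SIR of a typical link at time $t$, as a function of the configuration $\omega$ of active interferers), such that $P(S_t>\theta)=1-P_b$ for all $t$, with $P_b\in[0,1)$. Define $$P_{\text{fail}}=1-\frac{P(S_0>\theta,S_1>\theta,\dots,S_L>\theta)}{P(S_0>\theta)},\qquad P_{out}=P_b+(1-P_b)P_{\text{fail}}.$$ Then $P_{out}\le 1-(1-P_b)^{L+1}$.
   Context: CSMA model with energy-harvesting transmitters: a packet occupies $L$ slots; the typical transmitter backs off (with probability $P_b$) if its SIR at time $0$ is at most $\theta$, and otherwise transmits, the transmission failing if the SIR drops to at most $\theta$ at some time $1,\dots,L$. The configuration $\omega$ records which interferers are active at each time, with independent activity indicators (the paper's independence approximation), and since adding active interferers cannot increase the SIR, each $S_t$ is nonincreasing in $\omega$; all SIRs are identically distributed. $P_{out}$ is the outage probability. *)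

From HB Require Import structures.
From mathcomp Require Import all_boot all_order all_algebra.
From mathcomp Require Import all_classical all_reals.
From mathcomp Require Import all_analysis measurable_realfun.
Set Implicit Arguments. Unset Strict Implicit. Unset Printing Implicit Defensive.
Import Order.TTheory GRing.Theory Num.Theory.
Local Open Scope classical_set_scope.
Local Open Scope ring_scope.

(* Generators of the product sigma-algebra on {0,1}^I : the coordinate
   cylinders {w | w i = true}. *)
Definition cylinders (I : Type) : set (set (I -> bool)) :=
  [set A | exists i, A = [set w | w i = true]].

Notation Omega I := (@g_sigma_algebraType (I -> bool) (@cylinders I)).

(* P is a product (Bernoulli) probability measure on {0,1}^I: there are
   p_i in [0,1] such that the coordinates are independent Bernoulli(p_i),
   i.e. every finite-dimensional cylinder has product probability. *)
Definition is_product_measure (R : realType) (I : countType)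
  (P : probability (Omega I) R) : Prop :=
  exists p : I -> R, (forall i, 0 <= p i <= 1) /\
    forall (s : seq I) (b : I -> bool), uniq s ->
      P [set w : Omega I | forall i, i \in s -> w i = b i] =
      (\prod_(i <- s) (if b i then p i else 1 - p i))%:E.

Definition conf_le (I : Type) (w w' : I -> bool) : Prop :=
  forall i, w i -> w' i.

Definition Pfail (R : realType) (I : countType) (P : probability (Omega I) R)
  (S : nat -> Omega I -> \bar R) (theta : R) (L : nat) : R :=
  1 - fine (P [set w | forall t, (t <= L)%N -> (theta%:E < S t w)%E])
      / fine (P [set w | (theta%:E < S 0%N w)%E]).

Definition Pout (R : realType) (I : countType) (P : probability (Omega I) R)
  (S : nat -> Omega I -> \bar R) (theta Pb : R) (L : nat) : R :=
  Pb + (1 - Pb) * Pfail P S theta L.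

From HB Require Import structures.
From mathcomp Require Import all_boot all_order all_algebra.
From mathcomp Require Import all_classical all_reals.
From mathcomp Require Import all_analysis measurable_realfun.
From mathcomp Require Import ring lra.
Import Order.TTheory GRing.Theory Num.Theory.
Import numFieldNormedType.Exports.
Set Implicit Arguments. Unset Strict Implicit. Unset Printing Implicit Defensive.
Local Open Scope classical_set_scope.
Local Open Scope ring_scope.

(* The events {S_t > theta} are decreasing in the configuration of active
   interferers, so by the Harris (FKG) inequality for product measures they are
   positively correlated: P(S_0 > theta, ..., S_L > theta) >= (1 - P_b)^(L+1),
   which rearranges to the bound on P_out.
   Harris' inequality P(A) P(B) <= P(A & B) for decreasing A, B is first proved
   up to the error P(A + C), where C depends only on finitely many coordinates
   K: once the coordinates of K are pinned C is trivial, and releasing the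
   pinned coordinates one at a time preserves the inequality by the two-point
   Chebyshev inequality. As every measurable event is approximated in measure
   by finitely determined ones, the error can be made arbitrarily small. *)

Lemma two_point_chebyshev (R : realDomainType) (p a0 a1 b0 b1 : R) :
  0 <= p <= 1 -> a1 <= a0 -> b1 <= b0 ->
  (p * a1 + (1 - p) * a0) * (p * b1 + (1 - p) * b0) <=
  p * (a1 * b1) + (1 - p) * (a0 * b0).
Proof.
move=> /andP[p0 p1] le_a le_b; rewrite -subr_ge0.
have -> : p * (a1 * b1) + (1 - p) * (a0 * b0) -
    (p * a1 + (1 - p) * a0) * (p * b1 + (1 - p) * b0) =
  p * (1 - p) * ((a0 - a1) * (b0 - b1)) by ring.
by rewrite !mulr_ge0 ?subr_ge0.
Qed.

Lemma measurableY d (T : measurableType d) (A B : set T) :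
  measurable A -> measurable B -> measurable (A `+` B).
Proof. by move=> mA mB; apply: measurableU; apply: measurableD. Qed.

Lemma setY_sub_setU (T : Type) (A B C : set T) :
  A `+` C `<=` (A `+` B) `|` (B `+` C).
Proof.
move=> x [[Ax nCx]|[Cx nAx]]; have [Bx|nBx] := pselect (B x).
- by right; left.
- by left; left.
- by left; right.
- by right; right.
Qed.

Lemma setCY (T : Type) (A B : set T) : ~` A `+` ~` B = A `+` B.
Proof.
by rewrite !setY_def !setDE !setCK setUC [~` A `&` B]setIC [~` B `&` A]setIC.
Qed.

Section real_probability.
Context d (T : measurableType d) (R : realType) (P : probability T R).

Definition pr (E : set T) : R := fine (P E).

Lemma prE E : measurable E -> P E = (pr E)%:E.
Proof.
move=> mE; rewrite /pr fineK // ge0_fin_numE ?measure_ge0 //.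
by rewrite (le_lt_trans (probability_le1 P mE)) // ltry.
Qed.

Lemma pr_ge0 E : 0 <= pr E.
Proof. by rewrite /pr fine_ge0 // measure_ge0. Qed.

Lemma pr_le1 E : measurable E -> pr E <= 1.
Proof. by move=> mE; rewrite -lee_fin -prE // probability_le1. Qed.

Lemma pr_set0 : pr set0 = 0.
Proof. by rewrite /pr measure0. Qed.

Lemma le_pr A B : measurable A -> measurable B -> A `<=` B -> pr A <= pr B.
Proof. by move=> mA mB AB; rewrite -lee_fin -!prE // le_measure // inE. Qed.

Lemma pr_setU_le A B : measurable A -> measurable B ->
  pr (A `|` B) <= pr A + pr B.
Proof.
move=> mA mB; rewrite -lee_fin EFinD -!prE //; last exact: measurableU.
exact: measureU2.
Qed.

Lemma pr_setDI A B : measurable A -> measurable B ->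
  pr A = pr (A `\` B) + pr (A `&` B).
Proof.
move=> mA mB; apply: EFin_inj; rewrite EFinD -!prE //.
- exact: measureDI.
- exact: measurableI.
- exact: measurableD.
Qed.

Lemma pr_setC A : measurable A -> pr (~` A) = 1 - pr A.
Proof.
move=> mA; apply: EFin_inj; rewrite EFinB -!prE ?probability_setC //.
exact: measurableC.
Qed.

Lemma pr_setI_ge A B : measurable A -> measurable B ->
  pr A + pr B - 1 <= pr (A `&` B).
Proof.
move=> mA mB; rewrite (pr_setDI mB mA) setIC.
have : pr (B `\` A) <= pr (~` A).
  by apply: le_pr; [exact: measurableD | exact: measurableC | move=> x []].
rewrite pr_setC //; lra.
Qed.

Lemma pr_bigsetU_le n (F : nat -> set T) : (forall i, measurable (F i)) ->
  pr (\big[setU/set0]_(i < n) F i) <= \sum_(i < n) pr (F i).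
Proof.
move=> mF; elim: n => [|n IH]; first by rewrite !big_ord0 pr_set0.
rewrite !big_ord_recr /=; apply: le_trans (pr_setU_le _ (mF n)) _.
  exact: bigsetU_measurable.
exact: lerD.
Qed.

Lemma pr_bigcup_tail (F : nat -> set T) eps :
  (forall i, measurable (F i)) -> 0 < eps ->
  exists N, pr (\bigcup_i F i `\` \big[setU/set0]_(i < N) F i) <= eps.
Proof.
move=> mF eps0; pose U n := \big[setU/set0]_(i < n.+1) F i.
have mU n : measurable (U n) by exact: bigsetU_measurable.
have mUF : measurable (\bigcup_i F i) by exact: bigcupT_measurable.
have ndU : nondecreasing_seq U.
  apply/nondecreasing_seqP => n; apply/subsetPset.
  by rewrite /U [X in _ `<=` X]big_ord_recr /=; exact: subsetUl.
have UF : \bigcup_n U n = \bigcup_i F i by exact: bigcup_bigsetU_bigcup.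
have cvgU : (P \o U) @ \oo --> P (\bigcup_i F i).
  by rewrite -UF; apply: nondecreasing_cvg_mu => //; rewrite UF.
rewrite prE // in cvgU.
have : pr (U n) @[n --> \oo] --> pr (\bigcup_i F i) by exact: fine_cvg.
move=> /cvgr_dist_le /(_ _ eps0) [N _ /(_ N (leqnn N)) /= distN].
have UNF : U N `<=` \bigcup_i F i by rewrite -UF; exact: bigcup_sup.
exists N.+1; rewrite (pr_setDI mUF (mU N)) (setIidr UNF) addrK ger0_norm // in distN.
exact: pr_ge0.
Qed.

End real_probability.

Section approximation.
Context d (T : measurableType d) (R : realType) (P : probability T R).
Variable G : set (set T).
Hypotheses (G_measurable : G `<=` measurable) (G_set0 : G set0)
  (G_setC : forall A, G A -> G (~` A))
  (G_setU : forall A B, G A -> G B -> G (A `|` B))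
  (measurable_G : measurable `<=` <<s G >>).

Definition approximable (E : set T) :=
  forall eps, 0 < eps -> exists2 C, G C & pr P (E `+` C) <= eps.

Let approximable_setC E : approximable E -> approximable (~` E).
Proof.
move=> aE eps eps0; have [C GC EC] := aE _ eps0.
by exists (~` C); [exact: G_setC | rewrite setCY].
Qed.

Let approximable_bigcup (F : nat -> set T) :
  (forall i, measurable (F i)) -> (forall i, approximable (F i)) ->
  approximable (\bigcup_i F i).
Proof.
move=> mF aF eps eps0; have eps2 : 0 < eps / 2 by rewrite divr_gt0.
have [N tailN] := pr_bigcup_tail P mF eps2.
pose delta := eps / 2 / N.+1%:R.
have delta0 : 0 < delta by rewrite divr_gt0 // ltr0Sn.
have /choice [C HC] : forall i, exists C, G C /\ pr P (F i `+` C) <= delta.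
  by move=> i; have [C ? ?] := aF i _ delta0; exists C.
have mC i : measurable (C i) by apply: G_measurable; case: (HC i).
pose FN := \big[setU/set0]_(i < N) F i; pose CN := \big[setU/set0]_(i < N) C i.
have mFN : measurable FN by exact: bigsetU_measurable.
have mCN : measurable CN by exact: bigsetU_measurable.
have mUF : measurable (\bigcup_i F i) by exact: bigcupT_measurable.
exists CN; first by apply: (big_ind G) => // i _; case: (HC i).
have FNF : FN `<=` \bigcup_i F i.
  by move=> x; rewrite /FN -bigcup_mkord => -[i _ Fix]; exists i.
have FCN : FN `+` CN `<=` \big[setU/set0]_(i < N) (F i `+` C i).
  move=> x; rewrite /FN /CN -!bigcup_mkord -(bigcup_mkord N (fun i => F i `+` C i)).
  move=> [[[i iN Fix] nC]|[[i iN Cix] nF]]; exists i => //.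
    by left; split=> // Cix; apply: nC; exists i.
  by right; split=> // Fix; apply: nF; exists i.
have mY i : measurable (F i `+` C i) by exact: measurableY.
have tail : pr P (\bigcup_i F i `+` FN) <= eps / 2.
  by rewrite setY_def (_ : FN `\` _ = set0) ?setU0 // -subset0 => x [/FNF].
have head : pr P (FN `+` CN) <= eps / 2.
  apply: le_trans (le_pr P (measurableY mFN mCN) _ FCN) _.
    by apply: bigsetU_measurable => i _.
  apply: le_trans (pr_bigsetU_le P _ mY) _.
  apply: le_trans (_ : \sum_(i < N) delta <= _).
    by apply: ler_sum => i _; case: (HC i).
  rewrite sumr_const card_ord.
  have -> : eps / 2 = delta *+ N.+1.
    by rewrite -[delta *+ _]mulr_natr /delta divfK ?pnatr_eq0.
  by rewrite mulrSr lerDl ltW.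
have mUFN := measurableY mUF mFN; have mFCN := measurableY mFN mCN.
apply: le_trans (le_pr P (measurableY mUF mCN) (measurableU _ _ mUFN mFCN)
  (@setY_sub_setU _ _ FN CN)) _.
by apply: le_trans (pr_setU_le P mUFN mFCN) _; rewrite (splitr eps) lerD.
Qed.

Lemma sigma_algebra_approximable :
  sigma_algebra setT [set E | measurable E /\ approximable E].
Proof.
split.
- split=> // eps eps0; exists set0 => //.
  by rewrite setY0 pr_set0 ltW.
- move=> A [mA aA]; rewrite setTD.
  by split; [exact: measurableC | exact: approximable_setC].
- move=> F HF; split; first by apply: bigcupT_measurable => i; case: (HF i).
  by apply: approximable_bigcup => i; case: (HF i).
Qed.

Lemma measurable_approximable E : measurable E -> approximable E.
Proof.
move=> /measurable_G mE.
have GA : G `<=` [set E | measurable E /\ approximable E].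
  move=> C GC; split; first exact: G_measurable.
  by move=> eps eps0; exists C; rewrite // setYK pr_set0 ltW.
by case: (smallest_sub sigma_algebra_approximable GA mE).
Qed.

End approximation.

Section harris_inequality.
Context (R : realType) (I : countType) (P : probability (Omega I) R).
Local Notation T := (Omega I).
Local Notation pr := (pr P).

Definition cylinder (K : seq I) (y : I -> bool) : set T :=
  [set w | forall k, k \in K -> w k = y k].

Definition pin (J : seq I) (w : I -> bool) (v : T) : T :=
  fun k => if k \in J then w k else v k.

Definition decreasing_event (A : set T) :=
  forall v v', conf_le v v' -> A v' -> A v.

Definition determined_by (K : seq I) (C : set T) :=
  forall v v', {in K, v =1 v'} -> C v -> C v'.

Lemma measurable_coord i b : measurable [set w : T | w i = b].
Proof.
have mi : measurable [set w : T | w i = true] by apply: sub_sigma_algebra; exists i.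
case: b => //; rewrite (_ : [set w | w i = false] = ~` [set w | w i = true]).
  exact: measurableC.
by apply/seteqP; split => w /=; case: (w i).
Qed.

Lemma measurable_cylinder K y : measurable (cylinder K y).
Proof.
elim: K => [|k K IH].
  by rewrite (_ : cylinder [::] y = setT) //; apply/seteqP; split.
rewrite (_ : cylinder _ _ = [set w | w k = y k] `&` cylinder K y).
  exact: measurableI (measurable_coord _ _) IH.
apply/seteqP; split => w /=.
  by move=> h; split=> [|j jK]; apply: h; rewrite inE ?eqxx ?jK ?orbT.
by move=> [wk h] j; rewrite inE => /predU1P[->|/h].
Qed.

Lemma measurable_pin J w : measurable_fun setT (pin J w).
Proof.
apply: (@measurability _ _ T T setT (pin J w) (@cylinders I)) => // _ [_ [i ->] <-].
rewrite setTI /preimage /pin /=; case: (i \in J); last exact: measurable_coord.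
case: (w i); first by rewrite (_ : [set _ | _] = setT) //; apply/seteqP; split.
by rewrite (_ : [set _ | _] = set0) //; apply/seteqP; split.
Qed.

HB.instance Definition _ J w :=
  isMeasurableFun.Build _ _ T T (pin J w) (measurable_pin J w).

Lemma measurable_pin_preimage J w (E : set T) :
  measurable E -> measurable (pin J w @^-1` E : set T).
Proof. exact: measurable_funPTI. Qed.

(* [set0] is added to make the family closed under intersection. *)
Definition uniq_cylinders : set (set T) :=
  [set C | C = set0 \/ exists K y, uniq K /\ C = cylinder K y].

Lemma measurable_uniq_cylinders : measurable = <<s uniq_cylinders >>.
Proof.
apply/seteqP; split.
  apply: smallest_sub => // _ [i ->]; apply: sub_sigma_algebra.
  right; exists [:: i], (fun=> true); split => //.
  apply/seteqP; split => w /=; last by apply; rewrite inE.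
  by move=> wi k; rewrite inE => /eqP ->.
apply: smallest_sub; first exact: sigma_algebra_measurable.
by move=> _ [->|[K [y [_ ->]]]]; [exact: measurable0 | exact: measurable_cylinder].
Qed.

Lemma uniq_cylinders_setI : setI_closed uniq_cylinders.
Proof.
move=> A B [->|[K [y [uK ->]]]]; first by rewrite set0I; left.
move=> [->|[K' [y' [uK' ->]]]]; first by rewrite setI0; left.
have [[k [kK kK' yk]]|consistent] :=
  pselect (exists k, [/\ k \in K, k \in K' & y k <> y' k]).
  left; apply/seteqP; split => // w [wK wK'].
  by apply: yk; rewrite -wK // -wK'.
right; exists (undup (K ++ K')), (pin K y y'); split; first exact: undup_uniq.
apply/seteqP; split => w /=.
  move=> [wK wK'] k; rewrite mem_undup mem_cat /pin.
  by case: ifP => [kK _|_ /= kK']; [exact: wK | exact: wK'].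
move=> h; split => k kK; move: (h k);
  rewrite mem_undup mem_cat kK ?orbT /pin => /(_ isT); first by rewrite kK.
case: ifP => // kK0 ->; apply: contrapT => yk.
by apply: consistent; exists k; split.
Qed.

Section product_measure.
Variable p : I -> R.
Hypotheses (p01 : forall i, 0 <= p i <= 1)
  (P_cylinder : forall K y, uniq K ->
     P (cylinder K y) = (\prod_(k <- K) (if y k then p k else 1 - p k))%:E).

Definition weight i (b : bool) : R := if b then p i else 1 - p i.

Lemma weight_ge0 i b : 0 <= weight i b.
Proof. by rewrite /weight; case: b; have := p01 i; lra. Qed.

Lemma pr_cylinder K y : uniq K ->
  pr (cylinder K y) = \prod_(k <- K) weight k (y k).
Proof. by move=> uK; rewrite /pr P_cylinder. Qed.

Lemma cylinder_setI_coord K y i b : uniq K -> (i \in K) ==> (y i == b) ->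
  cylinder K y `&` cylinder [:: i] (fun=> b) =
  cylinder (i :: rem i K) (pin [:: i] (fun=> b) y).
Proof.
move=> uK /implyP yib; apply/seteqP; split => v /=.
  move=> [vK vi] k; rewrite inE (mem_rem_uniq _ uK) /pin !inE.
  have [->|ki] := eqVneq k i; first by move=> _; apply: vi; rewrite inE.
  by move=> /vK.
move=> h; split => k; last first.
  by rewrite inE => /eqP ->; have := h i; rewrite /pin !inE eqxx; apply.
move=> kK; have := h k; rewrite in_cons (mem_rem_uniq _ uK) /pin !inE kK andbT.
have [eki|ki] := eqVneq k i; last by apply.
by rewrite eki in kK *; rewrite (eqP (yib kK)); apply.
Qed.

Lemma preimage_pin_cylinder K y i b : uniq K -> (i \in K) ==> (y i == b) ->
  pin [:: i] (fun=> b) @^-1` cylinder K y = cylinder (rem i K) y.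
Proof.
move=> uK /implyP yib; apply/seteqP; split => v /= h k.
  rewrite (mem_rem_uniq _ uK) inE => /andP[ki kK].
  by have := h k kK; rewrite /pin inE (negbTE ki).
move=> kK; rewrite /pin inE; have [eki|ki] := eqVneq k i.
  by rewrite eki in kK *; exact/esym/eqP/yib.
by apply: h; rewrite (mem_rem_uniq _ uK) inE ki.
Qed.

Lemma pr_cylinder_setI_coord K y i b : uniq K ->
  pr (cylinder K y `&` cylinder [:: i] (fun=> b)) =
  weight i b * pr (pin [:: i] (fun=> b) @^-1` cylinder K y).
Proof.
move=> uK; have [yib|] := boolP ((i \in K) ==> (y i == b)); last first.
  rewrite negb_imply => /andP[iK ybi].
  have -> : cylinder K y `&` cylinder [:: i] (fun=> b) = set0.
    apply/seteqP; split => // v [vK /(_ i)]; rewrite inE eqxx (vK _ iK).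
    by move=> /(_ isT) yb; rewrite yb eqxx in ybi.
  have -> : pin [:: i] (fun=> b) @^-1` cylinder K y = set0.
    apply/seteqP; split => // v /(_ i iK); rewrite /pin inE eqxx => byi.
    by rewrite byi eqxx in ybi.
  by rewrite pr_set0 mulr0.
rewrite cylinder_setI_coord // preimage_pin_cylinder // !pr_cylinder ?rem_uniq //.
  rewrite big_cons /pin inE eqxx; congr (_ * _); apply: eq_big_seq => k.
  by rewrite (mem_rem_uniq _ uK) !inE => /andP[/negbTE ->].
by rewrite /= mem_rem_uniqF // rem_uniq.
Qed.

Lemma pr_setI_coord i b E : measurable E ->
  pr (E `&` cylinder [:: i] (fun=> b)) =
  weight i b * pr (pin [:: i] (fun=> b) @^-1` E).
Proof.
move=> mE; have mcyl := measurable_cylinder [:: i] (fun=> b).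
pose mu := mrestr P mcyl.
pose nu := mscale (NngNum (weight_ge0 i b)) (distribution P (pin [:: i] (fun=> b))).
have mpE := measurable_pin_preimage [:: i] (fun=> b) mE.
suff : (P (E `&` cylinder [:: i] (fun=> b)) =
    (weight i b)%:E * P (pin [:: i] (fun=> b) @^-1` E))%E.
  by rewrite !prE //; [case | exact: measurableI].
change (mu E = nu E); apply: (measure_unique uniq_cylinders (fun=> setT)) => //.
- exact: measurable_uniq_cylinders.
- exact: uniq_cylinders_setI.
- by move=> _; right; exists [::], (fun=> true); split => //; apply/seteqP; split.
- by rewrite bigcup_const.
- move=> C [->|[K [y [uK ->]]]]; first by rewrite !measure0.
  change (P (cylinder K y `&` cylinder [:: i] (fun=> b)) =
    (weight i b)%:E * P (pin [:: i] (fun=> b) @^-1` cylinder K y))%E.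
  have mK := measurable_cylinder K y.
  rewrite (prE P (measurableI _ _ mK mcyl)).
  by rewrite (prE P (measurable_pin_preimage _ _ mK)) pr_cylinder_setI_coord.
- move=> k; change (P (setT `&` cylinder [:: i] (fun=> b)) < +oo)%E.
  by rewrite setTI (le_lt_trans (probability_le1 _ mcyl)) ?ltry.
Qed.

Lemma pr_decompose_coord i E : measurable E ->
  pr E = p i * pr (pin [:: i] (fun=> true) @^-1` E)
       + (1 - p i) * pr (pin [:: i] (fun=> false) @^-1` E).
Proof.
move=> mE; rewrite (pr_setDI P mE (measurable_cylinder [:: i] (fun=> true))).
rewrite addrC pr_setI_coord //; congr (_ + _).
rewrite -[1 - p i]/(weight i false) -pr_setI_coord //; congr pr.
apply/seteqP; split => v [Ev vi]; split => //.
  move=> k; rewrite inE => /eqP ->; apply/negbTE/negP => vi1.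
  by apply: vi => j; rewrite inE => /eqP ->.
by move=> /(_ i); rewrite inE eqxx (vi i) ?inE // => /(_ isT).
Qed.

(* By independence of the coordinates, the law of [pin J w] is the conditional
   law given that the coordinates in [J] agree with [w]. *)
Definition pr_pinned J w (E : set T) := pr (pin J w @^-1` E).

Lemma pin_pin J i b w : i \notin J ->
  pin J w \o pin [:: i] (fun=> b) = pin (i :: J) (pin [:: i] (fun=> b) w).
Proof.
move=> iJ; apply/funext => v; apply/funext => k; rewrite /pin /= !inE.
by have [->|] := eqVneq k i; [rewrite (negbTE iJ) | case: (k \in J)].
Qed.

Lemma pr_pinned_cons J w i E : measurable E -> i \notin J ->
  pr_pinned J w E =
    p i * pr_pinned (i :: J) (pin [:: i] (fun=> true) w) E +
    (1 - p i) * pr_pinned (i :: J) (pin [:: i] (fun=> false) w) E.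
Proof.
move=> mE iJ; have pinE b : pin [:: i] (fun=> b) @^-1` (pin J w @^-1` E) =
    pin (i :: J) (pin [:: i] (fun=> b) w) @^-1` E by rewrite -pin_pin.
by rewrite /pr_pinned (pr_decompose_coord i (measurable_pin_preimage J w mE)) !pinE.
Qed.

Lemma pr_pinned_nil w E : pr_pinned [::] w E = pr E.
Proof. by rewrite /pr_pinned (_ : pin [::] w = id) //; apply/funext. Qed.

Lemma le_pr_pinned J w w' A : measurable A -> decreasing_event A ->
  conf_le w w' -> pr_pinned J w' A <= pr_pinned J w A.
Proof.
move=> mA decA ww'; apply: le_pr; try exact: measurable_pin_preimage.
by move=> v; apply: decA => k; rewrite /pin; case: (k \in J) => //; exact: ww'.
Qed.

Definition harris_given J (A B D : set T) :=
  forall w, pr_pinned J w A * pr_pinned J w B - pr_pinned J w D <=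
            pr_pinned J w (A `&` B).

Section harris_given.
Variables (A B : set T).
Hypotheses (mA : measurable A) (mB : measurable B)
  (decA : decreasing_event A) (decB : decreasing_event B).

Lemma harris_given_uncons J i D : measurable D -> i \notin J ->
  harris_given (i :: J) A B D -> harris_given J A B D.
Proof.
move=> mD iJ hJ w; have mAB := measurableI _ _ mA mB.
rewrite !(pr_pinned_cons w _ iJ) //.
set w1 := pin [:: i] (fun=> true) w; set w0 := pin [:: i] (fun=> false) w.
have w01 : conf_le w0 w1 by move=> k; rewrite /w0 /w1 /pin; case: ifP.
have leA := le_pr_pinned (i :: J) mA decA w01.
have leB := le_pr_pinned (i :: J) mB decB w01.
have cheb := two_point_chebyshev (p01 i) leA leB.
have /andP[p0 p1] := p01 i; have q0 : 0 <= 1 - p i by rewrite subr_ge0.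
have h1 := ler_wpM2l p0 (hJ w1); have h0 := ler_wpM2l q0 (hJ w0).
lra.
Qed.

Lemma harris_given_determined K C : measurable C -> determined_by K C ->
  harris_given K A B (A `+` C).
Proof.
move=> mC detC w; rewrite /pr_pinned.
have mpA := measurable_pin_preimage K w mA.
have mpB := measurable_pin_preimage K w mB.
have pin_w v : {in K, w =1 pin K w v} by move=> k kK; rewrite /pin kK.
have lepA := pr_le1 P mpA; have lepB := pr_le1 P mpB.
have gepA := pr_ge0 P (pin K w @^-1` A); have gepB := pr_ge0 P (pin K w @^-1` B).
have [Cw|nCw] := pselect (C w).
  have -> : pin K w @^-1` (A `+` C) = ~` (pin K w @^-1` A).
    by rewrite -setYTC; congr setY; apply/seteqP; split => // v _; exact: detC Cw.
  have := pr_setI_ge P mpA mpB; rewrite pr_setC //.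
  have : pr (pin K w @^-1` A) * pr (pin K w @^-1` B) <= pr (pin K w @^-1` B).
    by rewrite ler_piMl.
  lra.
have -> : pin K w @^-1` (A `+` C) = pin K w @^-1` A.
  rewrite -[RHS]setY0; congr setY; apply/seteqP; split => // v /= Cv.
  by apply: nCw; apply: detC Cv => k kK; rewrite (pin_w v).
have : pr (pin K w @^-1` A) * pr (pin K w @^-1` B) <= pr (pin K w @^-1` A).
  by rewrite ler_piMr.
have := pr_ge0 P (pin K w @^-1` (A `&` B)); lra.
Qed.

Lemma harris_given_nil J D : measurable D -> uniq J ->
  harris_given J A B D -> harris_given [::] A B D.
Proof.
move=> mD; elim: J => [//|i J IH] /= /andP[iJ uJ] hJ.
exact/IH/(harris_given_uncons mD iJ).
Qed.

Lemma harris_approx K C : measurable C -> determined_by K C ->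
  pr A * pr B - pr (A `+` C) <= pr (A `&` B).
Proof.
move=> mC detC; have detC' : determined_by (undup K) C.
  by move=> v v' vv'; apply: detC => k kK; apply: vv'; rewrite mem_undup.
have := harris_given_nil (measurableY mA mC) (undup_uniq K)
  (harris_given_determined mC detC') (fun=> true).
by rewrite !pr_pinned_nil.
Qed.

End harris_given.

Definition finitely_determined : set (set T) :=
  [set C | measurable C /\ exists K, determined_by K C].

Lemma approximable_finitely_determined E :
  measurable E -> approximable P finitely_determined E.
Proof.
apply: measurable_approximable.
- by move=> C [].
- by split => //; exists [::].
- move=> C [mC [K detC]]; split; first exact: measurableC.
  by exists K => v v' vv' nCv Cv'; apply: nCv; apply: detC Cv' => k /vv'.
- move=> C C' [mC [K detC]] [mC' [K' detC']]; split; first exact: measurableU.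
  exists (K ++ K') => v v' vv' [Cv|Cv'];
    [left; apply: detC Cv | right; apply: detC' Cv'];
    by move=> k kK; apply: vv'; rewrite mem_cat kK ?orbT.
- move=> E' mE'; apply: (smallest_sub (smallest_sigma_algebra _ _) _ mE').
  move=> _ [i ->]; apply: sub_sigma_algebra; split; first exact: measurable_coord.
  by exists [:: i] => v v' vv' /= <-; rewrite vv' ?inE.
Qed.

Lemma harris A B : measurable A -> measurable B ->
  decreasing_event A -> decreasing_event B -> pr A * pr B <= pr (A `&` B).
Proof.
move=> mA mB decA decB; apply/ler_addgt0Pr => e e0.
have [C [mC [K detC]] AC] := approximable_finitely_determined mA e0.
have := harris_approx mA mB decA decB mC detC; lra.
Qed.

Lemma harris_bigcap (A : nat -> set T) n :
  (forall t, (t <= n)%N -> measurable (A t) /\ decreasing_event (A t)) ->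
  \prod_(t < n.+1) pr (A t) <= pr [set w | forall t, (t <= n)%N -> A t w].
Proof.
elim: n => [|n IH] hA.
  rewrite big_ord1 (_ : [set w | _] = A 0%N) //.
  by apply/seteqP; split => w /=; [apply | move=> A0 t; rewrite leqn0 => /eqP ->].
have {IH} := IH (fun t tn => hA t (leqW tn)).
set Bn := [set w | _]; have [mAn decAn] := hA n.+1 (leqnn _).
have mBn : measurable Bn.
  by apply: bigcap_measurableType => t tn; case: (hA t (leqW tn)).
have decBn : decreasing_event Bn.
  move=> v v' vv' Bv' t tn.
  by case: (hA t (leqW tn)) => _ /(_ _ _ vv'); apply; exact: Bv'.
have -> : [set w | forall t, (t <= n.+1)%N -> A t w] = Bn `&` A n.+1.
  apply/seteqP; split => w /=.
    by move=> h; split=> [t tn|]; apply: h => //; exact: leqW.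
  by move=> [Bw An] t; rewrite leq_eqVlt => /predU1P[->|]; [|exact: Bw].
move=> le_prod; rewrite big_ord_recr /=.
apply: le_trans (harris mBn mAn decBn decAn).
by rewrite ler_wpM2r ?pr_ge0.
Qed.

End product_measure.
End harris_inequality.

Theorem lemma5 (R : realType) (I : countType) (P : probability (Omega I) R)
  (L : nat) (theta Pb : R) (S : nat -> Omega I -> \bar R) :
  (1 <= L)%N -> 0 < theta ->
  is_product_measure P ->
  (forall t, (t <= L)%N -> measurable_fun setT (S t)) ->
  (forall t w, (t <= L)%N -> (0 < S t w)%E) ->
  (forall t w w', (t <= L)%N -> conf_le w w' -> (S t w' <= S t w)%E) ->
  0 <= Pb < 1 ->
  (forall t, (t <= L)%N -> P [set w | (theta%:E < S t w)%E] = (1 - Pb)%:E) ->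
  Pout P S theta Pb L <= 1 - (1 - Pb) ^+ L.+1.
Proof.
move=> _ _ [p [p01 P_cylinder]] mS _ antiS /andP[Pb0 Pb1] PS.
pose A t := [set w : Omega I | (theta%:E < S t w)%E].
have decA t : (t <= L)%N -> measurable (A t) /\ decreasing_event (A t).
  move=> tL; split; last by move=> v v' vv' /lt_le_trans; apply; exact: antiS.
  by have := emeasurable_fun_o_infty measurableT (mS t tL) theta%:E; rewrite setTI.
have := harris_bigcap p01 P_cylinder decA.
rewrite (eq_bigr (fun=> 1 - Pb)) => [|t _]; last by rewrite /pr PS // -ltnS.
rewrite prodr_const card_ord /pr /Pout /Pfail PS //=.
set q := fine _ => le_q; have Pb1' : 1 - Pb != 0 by rewrite subr_eq0 gt_eqF.
have -> : Pb + (1 - Pb) * (1 - q / (1 - Pb)) = 1 - q by field.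
lra.
Qed.
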